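(* Let $\mathbb M=(V,d)$ be a binary structure and let $A,B$ be robust modules of $\mathbb M$, each with at least two elements, such that $B\subsetneq A$, the Gallai quotients of $A$ and of $B$ are not prime, and $t(A)=t(B)$. Then there is a robust module $C$ with $B\subsetneq C\subsetneq A$ whose type is different from $t(A)$.
   Context: A binary structure over a set $W$ is a pair $\mathbb M=(V,d)$ with $d:V\times V\to W$. A module of $\mathbb M$ is a set $A\subseteq V$ such that $d(x,y)=d(x,y')$ and $d(y,x)=d(y',x)$ for all $x\in V\setminus A$ and $y,y'\in A$. A module is strong if for every module $B$, either $A\subseteq B$, $B\subseteq A$, or $A\cap B=\emptyset$. For $X\subseteq V$, $S_{\mathbb M}(X)$ is the intersection of all strong modules containing $X$. A module is robust if it is a singleton or equals $S_{\mathbb M}(\{x,y\})$ for some distinct $x,y\in V$. For a strong module $A$ and $x,y\in A$, put $x\equiv_A y$ iff $x=y$ or some strong module containing $x,y$ is properly contained in $A$; this is an equivalence relation whose classes (the components of $A$) are modules, and if $A$ is robust with at least two elements there are at least two components. For disjoint non-empty modules $X,Y$, $d(X,Y)$ denotes the common value of $d(x,y)$, $x\in X$, $y\in Y$. The Gallai quotient of a robust $A$ with $|A|\ge2$ is the binary structure on the set of components of $A$ given by $(I,J)\mapsto d(I,J)$ for $I\neq J$. It is prime if it has at least three elements and only trivial modules (empty, singletons, whole set). The type of $A$ is ''prime'' if its Gallai quotient is prime, and otherwise $t(A)$ is the set $\{d(I,J): I,J$ distinct components of $A\}$. *)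

From mathcomp Require Import all_boot.
From mathcomp Require Import boolp classical_sets.
Set Implicit Arguments. Unset Strict Implicit. Unset Printing Implicit Defensive.
Local Open Scope classical_set_scope.

Definition is_module (V W : Type) (d : V -> V -> W) (A : set V) : Prop :=
  forall x y y', ~ A x -> A y -> A y' -> d x y = d x y' /\ d y x = d y' x.

Definition is_strong (V W : Type) (d : V -> V -> W) (A : set V) : Prop :=
  is_module d A /\
  forall B, is_module d B -> A `<=` B \/ B `<=` A \/ A `&` B = set0.

Definition S_M (V W : Type) (d : V -> V -> W) (X : set V) : set V :=
  [set v | forall A, is_strong d A -> X `<=` A -> A v].

Definition is_robust (V W : Type) (d : V -> V -> W) (A : set V) : Prop :=
  is_module d A /\
  ((exists x, A = [set x]) \/ (exists x y, x <> y /\ A = S_M d [set x; y])).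

Definition equivA (V W : Type) (d : V -> V -> W) (A : set V) (x y : V) : Prop :=
  x = y \/ exists C, is_strong d C /\ C x /\ C y /\ C `<` A.

Definition components (V W : Type) (d : V -> V -> W) (A : set V) : set (set V) :=
  [set I | exists x, A x /\ I = [set y | A y /\ equivA d A x y]].

(* Modules of the Gallai quotient of A: families of components X such that
   d(I,J) = d(I,J') and d(J,I) = d(J',I) for every component I outside X and
   J, J' in X (d(I,J) being the common value d(x,y), x in I, y in J). *)
Definition quotient_module (V W : Type) (d : V -> V -> W) (A : set V)
    (X : set (set V)) : Prop :=
  X `<=` components d A /\
  forall I J J', components d A I -> ~ X I -> X J -> X J' ->
    forall x y y', I x -> J y -> J' y' -> d x y = d x y' /\ d y x = d y' x.

Definition gallai_prime (V W : Type) (d : V -> V -> W) (A : set V) : Prop :=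
  (exists I J K, components d A I /\ components d A J /\ components d A K /\
     I <> J /\ J <> K /\ I <> K) /\
  forall X, quotient_module d A X ->
    X = set0 \/ (exists I, X = [set I]) \/ X = components d A.

Definition type_set (V W : Type) (d : V -> V -> W) (A : set V) : set W :=
  [set w | exists I J, components d A I /\ components d A J /\ I <> J /\
     exists x y, I x /\ J y /\ w = d x y].

(* The type t(A): None stands for "prime", Some T for the set T. *)
Definition type_of (V W : Type) (d : V -> V -> W) (A : set V) : option (set W) :=
  if pselect (gallai_prime d A) then None else Some (type_set d A).

Definition atleast2 (V : Type) (A : set V) : Prop :=
  exists x y, A x /\ A y /\ x <> y.

(* Suppose every robust module strictly between B and A had the type of A, and
   pick u, v in different components of B.  For t in A \ B the robust module
   S_M {u, t} contains B strictly and lies in A, so it is not prime and has the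
   type of B.  A strong module whose Gallai quotient is not prime is complete or
   linear: the arcs between different components carry two labels a, b in
   either order, and a-arcs are transitive when a <> b.  (With at least three
   components this follows by propagating the labels along chains of
   overlapping nontrivial submodules.)  Equal types force B and every S_M {u, t}
   to carry the same labels.  If a = b, the component of u in B together with
   A \ B is a module overlapping B.  If a <> b, an element of A \ B below u
   would make the elements of A \ B below u, together with the elements of B
   not above a fixed lower component of B, a module overlapping B; hence all of
   A \ B lies above u, and by the symmetry a <-> b also below u.  Both
   contradict the strongness of B. *)

From mathcomp Require Import all_boot.
From mathcomp Require Import boolp classical_sets.
Local Open Scope classical_set_scope.

Section BinaryStructure.
Set Implicit Arguments.
Unset Strict Implicit.
Context {V W : Type} {d : V -> V -> W}.
Implicit Types (A B C D M N X Y Z : set V) (x y z : V).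

(** * Modules, strong modules and components *)

Definition overlap X Y :=
  (exists m, X m /\ Y m) /\ (exists a, X a /\ ~ Y a) /\ (exists b, Y b /\ ~ X b).

Lemma overlapE X Y : overlap X Y <-> ~ (X `<=` Y \/ Y `<=` X \/ X `&` Y = set0).
Proof.
split=> [[[m [Xm Ym]] [[a [Xa Ya]] [b [Yb Xb]]]] | /not_orP[XY /not_orP[YX XY0]]].
  case=> [XY|[YX|XY0]]; [exact: Ya (XY a Xa) | exact: Xb (YX b Yb) |].
  by have : (X `&` Y) m by []; rewrite XY0.
have [a [Xa Ya]] := nonsubset XY; have [b [Yb Xb]] := nonsubset YX.
split; last by split; [exists a | exists b].
by apply: contrapT => /nonemptyPn.
Qed.

Lemma overlap_sym X Y : overlap X Y -> overlap Y X.
Proof. by move=> [[m [Xm Ym]] [XY YX]]; split; [exists m | split]. Qed.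

Lemma not_overlap_nested X Y m :
  ~ overlap X Y -> X m -> Y m -> X `<=` Y \/ Y `<=` X.
Proof.
move=> /overlapE/contrapT[|[]]; [by left | by right |].
by move=> XY0 Xm Ym; have : (X `&` Y) m by []; rewrite XY0.
Qed.

Lemma strong_not_overlap D N : is_strong d D -> is_module d N -> ~ overlap D N.
Proof. by move=> [_ sD] mN /overlapE; apply; apply: sD. Qed.

Lemma strong_nested D N z :
  is_strong d D -> is_module d N -> D z -> N z -> D `<=` N \/ N `<=` D.
Proof. by move=> sD mN; apply/not_overlap_nested/strong_not_overlap. Qed.

Lemma equivA_refl C x : equivA d C x x.
Proof. by left. Qed.

Lemma equivA_sym C x y : equivA d C x y -> equivA d C y x.
Proof. by case=> [->|[D [sD [Dx [Dy DC]]]]]; [left | right; exists D]. Qed.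

Lemma equivA_trans C x y z : equivA d C x y -> equivA d C y z -> equivA d C x z.
Proof.
case=> [->//|[D1 [s1 [D1x [D1y D1C]]]]].
case=> [<-|[D2 [s2 [D2y [D2z D2C]]]]]; first by right; exists D1.
right; case: (strong_nested s1 s2.1 D1y D2y) => [D12|D21].
  by exists D2; split=> //; split; first exact: D12.
by exists D1; do 3 split=> //; exact: D21.
Qed.

Lemma equivA_dE C x x' z :
  equivA d C x x' -> ~ equivA d C z x -> d z x = d z x' /\ d x z = d x' z.
Proof.
case=> [->//|[D [sD [Dx [Dx' DC]]]]] nzx; apply: sD.1 => // Dz.
by apply: nzx; right; exists D.
Qed.

Lemma S_M_module X : is_module d (S_M d X).
Proof.
move=> z y y' /existsNP[D] /not_implyP[sD /not_implyP[XD nDz]] Sy Sy'.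
by apply: sD.1 => //; [apply: Sy | apply: Sy'].
Qed.

Lemma S_M_min X D : is_strong d D -> X `<=` D -> S_M d X `<=` D.
Proof. by move=> sD XD z; apply. Qed.

Lemma sub_S_M X : X `<=` S_M d X.
Proof. by move=> z Xz D sD; apply. Qed.

Lemma S_M_strong X : is_strong d (S_M d X).
Proof.
split=> [|N mN]; first exact: S_M_module.
have [[D [sD [XD DN]]]|noD] :=
  pselect (exists D, is_strong d D /\ X `<=` D /\ D `<=` N).
  by left; apply: subset_trans DN; apply: S_M_min.
have [[m [Sm Nm]]|disj] := pselect (exists m, S_M d X m /\ N m); last first.
  by right; right; apply/nonemptyPn => -[m SNm]; apply: disj; exists m.
right; left=> z Nz D sD XD.
case: (strong_nested sD mN (Sm D sD XD) Nm) => [DN|]; last exact.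
by case: noD; exists D.
Qed.

Lemma robust_pairE C :
  is_robust d C -> atleast2 C -> exists u v, u <> v /\ C = S_M d [set u; v].
Proof. by move=> [_ [[x ->]|//]] [p [q [-> [-> pq]]]]. Qed.

Lemma S_M_pair_nequiv u v : u <> v -> ~ equivA d (S_M d [set u; v]) u v.
Proof.
move=> uv [//|[D [sD [Du [Dv [_ DS]]]]]]; apply: DS.
by apply: S_M_min => // z [->|->].
Qed.

Lemma module_within A N :
  is_module d A -> N `<=` A ->
  (forall z m m', A z -> ~ N z -> N m -> N m' -> d z m = d z m' /\ d m z = d m' z) ->
  is_module d N.
Proof.
move=> mA NA HN z m m' Nz Nm Nm'.
by have [Az|nAz] := pselect (A z); [apply: HN | apply: mA => //; apply: NA].
Qed.

Lemma moduleI X Y : is_module d X -> is_module d Y -> is_module d (X `&` Y).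
Proof.
move=> mX mY z y y' nXYz [Xy Yy] [Xy' Yy'].
have [Xz|nXz] := pselect (X z); last by apply: mX.
by apply: mY => // Yz; apply: nXYz.
Qed.

Lemma module_bigcup (P : set (set V)) x :
  (forall X, P X -> is_module d X /\ X x) ->
  is_module d [set z | exists X, P X /\ X z].
Proof.
move=> HP z y y' nz.
have eq_x w : (exists X, P X /\ X w) -> d z w = d z x /\ d w z = d x z.
  move=> [X [PX Xw]]; have [mX Xx] := HP X PX.
  by apply: mX => // Xz; apply: nz; exists X.
by move=> /eq_x[-> ->] /eq_x[-> ->].
Qed.

Lemma moduleU X Y m :
  is_module d X -> is_module d Y -> X m -> Y m -> is_module d (X `|` Y).
Proof.
move=> mX mY Xm Ym z y y' /not_orP[nXz nYz].
have eq_m w : (X `|` Y) w -> d z w = d z m /\ d w z = d m z.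
  by case=> [Xw|Yw]; [apply: mX | apply: mY].
by move=> /eq_m[-> ->] /eq_m[-> ->].
Qed.

Lemma moduleD X Y w :
  is_module d X -> is_module d Y -> Y w -> ~ X w -> is_module d (X `\` Y).
Proof.
move=> mX mY Yw nXw z y y' nz [Xy nYy] [Xy' nYy'].
have [Xz|nXz] := pselect (X z); last by apply: mX.
have Yz : Y z by apply: contrapT => nYz; apply: nz.
have [-> ->] := mY y z w nYy Yz Yw; have [-> ->] := mY y' z w nYy' Yz Yw.
exact: mX.
Qed.

Definition module_hull x y := [set z | forall D, is_module d D -> D x -> D y -> D z].

Lemma module_hull_module x y : is_module d (module_hull x y).
Proof.
move=> z p q /existsNP[D] /not_implyP[mD /not_implyP[Dx /not_implyP[Dy nDz]]] Hp Hq.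
by apply: (mD) => //; [apply: Hp | apply: Hq].
Qed.

Definition comp C x := [set y | C y /\ equivA d C x y].

Lemma comp_eq C x y : equivA d C x y -> comp C x = comp C y.
Proof.
move=> xy; rewrite eqEsubset; split=> w [Cw e]; split=> //.
  exact: equivA_trans (equivA_sym xy) e.
exact: equivA_trans xy e.
Qed.

Lemma comp_neq C x y : C y -> ~ equivA d C x y -> comp C x <> comp C y.
Proof.
move=> Cy nxy Exy; apply: nxy.
have : comp C y y by split=> //; apply: equivA_refl.
by rewrite -Exy => -[].
Qed.

Lemma type_setE C w :
  type_set d C w <-> exists x y, C x /\ C y /\ ~ equivA d C x y /\ w = d x y.
Proof.
split=> [[I [J [[i [Ci ->]] [[j [Cj ->]] [IJ [x [y [[Cx ix] [[Cy jy] ->]]]]]]]]]|].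
  exists x, y; do 3 split=> //.
  move=> xy; apply: IJ; apply: comp_eq.
  exact: equivA_trans ix (equivA_trans xy (equivA_sym jy)).
move=> [x [y [Cx [Cy [nxy ->]]]]]; exists (comp C x), (comp C y).
do 3 (split; first by [exists x | exists y | apply: comp_neq]).
exists x, y; split; first by split=> //; apply: equivA_refl.
by split=> //; split=> //; apply: equivA_refl.
Qed.

(** * Overlapping nontrivial submodules *)

Definition nontrivial_submodule C N :=
  is_module d N /\ N `<=` C /\ (exists c, C c /\ ~ N c) /\
  (exists a b, N a /\ N b /\ ~ equivA d C a b).

Lemma nontrivial_submodule_saturated C N p q :
  nontrivial_submodule C N -> N p -> equivA d C p q -> N q.
Proof.
move=> [mN [NC [_ [a [b [Na [Nb nab]]]]]]] Np [<-//|[D [sD [Dp [Dq DC]]]]].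
case: (strong_nested sD mN Dp Np) => [DN|ND]; first exact: DN.
exfalso; apply: nab; right; exists D.
by split=> //; split; [exact: ND | split; [exact: ND | done]].
Qed.

Lemma nontrivial_submodule_overlap C N :
  is_strong d C -> nontrivial_submodule C N ->
  exists N', nontrivial_submodule C N' /\ overlap N N'.
Proof.
move=> sC nN; have [mN [NC [[c [Cc nNc]] [a [b [Na [Nb nab]]]]]]] := nN.
have [N' [mN' oNN']] : exists N', is_module d N' /\ overlap N N'.
  apply: contrapT => noN'; apply: nab; right; exists N.
  split; last by do 2 split=> //; split=> // CN; apply: nNc; apply: CN.
  split=> // N' mN'; apply: contrapT => /overlapE oNN'.
  by apply: noN'; exists N'.
have [[m [Nm N'm]] [[p [Np nN'p]] [q [N'q nNq]]]] := oNN'.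
have N'C : N' `<=` C.
  case: (strong_nested sC mN' (NC m Nm) N'm) => // CN'.
  by exfalso; apply: nN'p; apply: CN'; apply: NC.
exists N'; do 3 (split=> //); split; first by exists p; split=> //; apply: NC.
exists m, q; split=> //; split=> // mq; apply: nNq.
exact: nontrivial_submodule_saturated nN Nm mq.
Qed.

Definition either_order (al be : W) (p : W * W) := p = (al, be) \/ p = (be, al).

Lemma either_order_swap al be a b :
  either_order al be (a, b) -> either_order al be (b, a).
Proof. by case=> [[-> ->]|[-> ->]]; [right | left]. Qed.

Lemma either_order_comm al be p : either_order al be p -> either_order be al p.
Proof. by case=> ->; [right | left]. Qed.

Lemma overlap_dE X Y a m a' m' :
  is_module d X -> is_module d Y -> overlap X Y ->
  X a -> ~ Y a -> Y m -> X a' -> ~ Y a' -> Y m' ->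
  (d a m, d m a) = (d a' m', d m' a').
Proof.
move=> mX mY [_ [_ [w [Yw nXw]]]] Xa nYa Ym Xa' nYa' Ym'.
have [-> ->] := mY a m w nYa Ym Yw; have [-> ->] := mY a' m' w nYa' Ym' Yw.
by have [-> ->] := mX w a a' nXw Xa Xa'.
Qed.

Definition separates Y p q := (~ Y p /\ Y q) \/ (Y p /\ ~ Y q).

Lemma overlap_common_separated X Y Z :
  overlap X Y -> overlap X Z ->
  exists p q, X p /\ X q /\ separates Y p q /\ separates Z p q.
Proof.
move=> [[b [Xb Yb]] [[a [Xa nYa]] _]] [[f [Xf Zf]] [[c [Xc nZc]] _]].
have [Za|nZa] := pselect (Z a); have [Zb|nZb] := pselect (Z b).
- have [Yc|nYc] := pselect (Y c).
    by exists a, c; do 2 split=> //; split; [left | right].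
  by exists c, b; do 2 split=> //; split; left.
- by exists a, b; do 2 split=> //; split; [left | right].
- by exists a, b; do 2 split=> //; split; left.
- have [Yf|nYf] := pselect (Y f).
    by exists a, f; do 2 split=> //; split; left.
  by exists f, b; do 2 split=> //; split; [left | right].
Qed.

Definition labelled al be X :=
  forall Z, is_module d Z -> overlap X Z ->
  forall a m, X a -> ~ Z a -> Z m -> either_order al be (d a m, d m a).

(* All arcs from X \ Y to Y coincide, and two points of X separated by both Y
   and Z carry them over to Z. *)
Lemma labelledP al be X Y a m :
  is_module d X -> is_module d Y -> overlap X Y -> X a -> ~ Y a -> Y m ->
  either_order al be (d a m, d m a) -> labelled al be X.
Proof.
move=> mX mY oXY Xa nYa Ym Ham Z mZ oXZ a' m' Xa' nZa' Zm'.
have [p [q [Xp [Xq [sY sZ]]]]] := overlap_common_separated oXY oXZ.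
wlog [nZp Zq] : p q Xp Xq sY sZ / ~ Z p /\ Z q.
  move=> wl; case: (sZ) => [|[Zp nZq]]; first exact: wl.
  by apply: (wl q p) => //; move: sY sZ; rewrite /separates; tauto.
rewrite (overlap_dE mX mZ oXZ Xa' nZa' Zm' Xp nZp Zq).
case: sY => [[nYp Yq]|[Yp nYq]].
  by rewrite -(overlap_dE mX mY oXY Xa nYa Ym Xp nYp Yq).
by apply: either_order_swap; rewrite -(overlap_dE mX mY oXY Xa nYa Ym Xq nYq Yp).
Qed.

Lemma labelled_overlap al be X Z :
  is_module d X -> is_module d Z -> labelled al be X -> overlap X Z ->
  labelled al be Z.
Proof.
move=> mX mZ lX oXZ; have [[m [Xm Zm]] [[c [Xc nZc]] [a [Za nXa]]]] := oXZ.
apply: (labelledP mZ mX (overlap_sym oXZ) Za nXa Xm).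
have [-> ->] := mX a m c nXa Xm Xc; have [<- <-] := mZ c m a nZc Zm Za.
exact/either_order_swap/(lX Z mZ oXZ).
Qed.

Inductive overlap_chain C X0 : set V -> Prop :=
  | chain_base : overlap_chain C X0 X0
  | chain_step Y Z : overlap_chain C X0 Y -> nontrivial_submodule C Z ->
      overlap Y Z -> overlap_chain C X0 Z.

Lemma chain_nontrivial C X0 Y :
  nontrivial_submodule C X0 -> overlap_chain C X0 Y -> nontrivial_submodule C Y.
Proof. by move=> nX0; elim. Qed.

Lemma chain_labelled al be C X0 Y :
  nontrivial_submodule C X0 -> labelled al be X0 -> overlap_chain C X0 Y ->
  labelled al be Y.
Proof.
move=> nX0 lX0; elim=> // Y1 Y2 cY1 lY1 nY2 o12.
exact: labelled_overlap (chain_nontrivial nX0 cY1).1 nY2.1 lY1 o12.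
Qed.

Lemma chain_nested C X0 Z :
  (forall Y, overlap_chain C X0 Y -> ~ overlap Y Z) ->
  forall Y, overlap_chain C X0 Y -> (Y `<=` Z <-> X0 `<=` Z).
Proof.
move=> noZ Y cY; elim: cY => [//|Y1 Y2 cY1 IH nY2 o12].
have [[m [Y1m Y2m]] [[a [Y1a nY2a]] [b [Y2b nY1b]]]] := o12.
rewrite -IH; split=> sub; have Zm : Z m by apply: sub.
- case: (not_overlap_nested (noZ Y1 cY1) Y1m Zm) => // ZY1.
  by exfalso; apply: nY1b; apply: ZY1; apply: sub.
- case: (not_overlap_nested (noZ Y2 (chain_step cY1 nY2 o12)) Y2m Zm) => // ZY2.
  by exfalso; apply: nY2a; apply: ZY2; apply: sub.
Qed.

Lemma chain_union_module C X0 :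
  nontrivial_submodule C X0 ->
  is_module d [set z | exists Y, overlap_chain C X0 Y /\ Y z].
Proof.
move=> nX0; have [mX0 [_ [_ [x0 [_ [X0x0 _]]]]]] := nX0.
move=> z y y' nz.
suff eq_x0 Y : overlap_chain C X0 Y -> forall w, Y w -> d z w = d z x0 /\ d w z = d x0 z.
  by move=> [Y [cY /(eq_x0 Y cY)[-> ->]]] [Y' [cY' /(eq_x0 Y' cY')[-> ->]]].
elim=> [|Y1 Y2 cY1 IH nY2 o12] w Yw.
  by apply: mX0 => // X0z; apply: nz; exists X0; split=> //; apply: chain_base.
have [[m [Y1m Y2m]] _] := o12.
have nY2z : ~ Y2 z.
  by move=> Y2z; apply: nz; exists Y2; split=> //; apply: chain_step cY1 nY2 o12.
by have [-> ->] := nY2.1 z w m nY2z Yw Y2m; apply: IH.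
Qed.

Lemma chain_cover C X0 c :
  is_strong d C -> nontrivial_submodule C X0 -> C c ->
  exists Y, overlap_chain C X0 Y /\ Y c.
Proof.
move=> sC nX0 Cc; apply: contrapT => nUc.
pose U := [set z | exists Y, overlap_chain C X0 Y /\ Y z].
have nU : nontrivial_submodule C U.
  have [_ [_ [_ [a [b [X0a [X0b nab]]]]]]] := nX0.
  split; first exact: chain_union_module.
  split; first by move=> z [Y [cY Yz]]; apply: (chain_nontrivial nX0 cY).2.1.
  split; first by exists c.
  by exists a, b; do 2 (split; first by exists X0; split=> //; apply: chain_base).
have [Z [nZ oUZ]] := nontrivial_submodule_overlap sC nU.
have [[m [[Y1 [cY1 Y1m]] Zm]] [[a [Ua nZa]] [b [Zb nUb]]]] := oUZ.
have [[Y [cY oYZ]]|noZ] := pselect (exists Y, overlap_chain C X0 Y /\ overlap Y Z).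
  by apply: nUb; exists Z; split=> //; apply: chain_step cY nZ oYZ.
have {}noZ Y : overlap_chain C X0 Y -> ~ overlap Y Z.
  by move=> cY oYZ; apply: noZ; exists Y.
case: (not_overlap_nested (noZ Y1 cY1) Y1m Zm) => [Y1Z|ZY1].
  have [Y [cY Ya]] := Ua; apply: nZa.
  exact: (chain_nested noZ cY).2 ((chain_nested noZ cY1).1 Y1Z) a Ya.
by apply: nUb; exists Y1; split=> //; apply: ZY1.
Qed.

Lemma chain_not_sub C X0 Z :
  is_strong d C -> nontrivial_submodule C X0 -> nontrivial_submodule C Z ->
  (forall Y, overlap_chain C X0 Y -> ~ overlap Y Z) -> ~ X0 `<=` Z.
Proof.
move=> sC nX0 [_ [_ [[c [Cc nZc]] _]]] noZ X0Z.
have [Y [cY Yc]] := chain_cover sC nX0 Cc.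
exact: nZc ((chain_nested noZ cY).2 X0Z c Yc).
Qed.

Lemma all_labelled al be C X0 N :
  is_strong d C -> nontrivial_submodule C X0 -> labelled al be X0 ->
  nontrivial_submodule C N -> labelled al be N.
Proof.
move=> sC nX0 lX0 nN; apply: contrapT => nlN.
have nl Z : overlap_chain C N Z -> ~ labelled al be Z.
  elim=> // Y1 Y2 cY1 IH nY2 o12 lY2; apply: IH.
  exact: labelled_overlap nY2.1 (chain_nontrivial nN cY1).1 lY2 (overlap_sym o12).
have no Y Z : overlap_chain C X0 Y -> overlap_chain C N Z -> ~ overlap Y Z.
  move=> cY cZ oYZ; apply: (nl Z cZ).
  exact: labelled_overlap (chain_nontrivial nX0 cY).1 (chain_nontrivial nN cZ).1
    (chain_labelled nX0 lX0 cY) oYZ.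
have [_ [X0C [_ [x [_ [X0x _]]]]]] := nX0.
have [Z1 [cZ1 Z1x]] := chain_cover sC nN (X0C x X0x).
have cX0 : overlap_chain C X0 X0 by apply: chain_base.
case: (not_overlap_nested (no X0 Z1 cX0 cZ1) X0x Z1x) => [X0Z1|Z1X0].
  exact: chain_not_sub sC nX0 (chain_nontrivial nN cZ1) (fun Y cY => no Y Z1 cY cZ1) X0Z1.
have noX0 Y : overlap_chain C N Y -> ~ overlap Y X0.
  by move=> cY /overlap_sym; apply: no cX0 cY.
exact: chain_not_sub sC nN nX0 noX0 ((chain_nested noX0 cZ1).1 Z1X0).
Qed.

Lemma module_hull_min x y D : is_module d D -> D x -> D y -> module_hull x y `<=` D.
Proof. by move=> mD Dx Dy z; apply. Qed.

Lemma separating_overlap C X0 x y :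
  is_strong d C -> nontrivial_submodule C X0 -> C x -> C y ->
  C `<=` module_hull x y ->
  exists H K, nontrivial_submodule C H /\ nontrivial_submodule C K /\
    overlap H K /\ H x /\ ~ H y /\ K y.
Proof.
move=> sC nX0 Cx Cy Chull.
have [Y [cY Yx]] := chain_cover sC nX0 Cx.
have nY := chain_nontrivial nX0 cY.
have nYy : ~ Y y.
  move=> Yy; have [mY [_ [[c [Cc nYc]] _]]] := nY.
  by apply: nYc; apply: module_hull_min mY Yx Yy c (Chull c Cc).
pose H := [set z | exists X, (nontrivial_submodule C X /\ X x /\ ~ X y) /\ X z].
have Hx : H x by exists Y.
have nHy : ~ H y by move=> [X [[_ [_ nXy]] Xy]].
have nH : nontrivial_submodule C H.
  have [_ [_ [_ [a [b [Ya [Yb nab]]]]]]] := nY.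
  split; first by apply: (@module_bigcup _ x) => X [nX [Xx _]]; split=> //; apply: nX.1.
  split; first by move=> z [X [[nX _] Xz]]; apply: nX.2.1.
  split; first by exists y.
  by exists a, b; split; [exists Y | split; [exists Y |]].
have [K [nK oHK]] := nontrivial_submodule_overlap sC nH.
exists H, K; do 5 split=> //; apply: contrapT => nKy.
have [[m [Hm Km]] [_ [b [Kb nHb]]]] := oHK.
apply: nHb; exists (H `|` K); split; last by right.
have [_ [HC [_ [a [a' [Ha [Ha' naa']]]]]]] := nH.
split; last by split; [left | case].
split; first exact: moduleU nH.1 nK.1 Hm Km.
split; first by move=> z [/HC|/nK.2.1].
split; first by exists y; split=> //; case.
by exists a, a'; split; [left | split; [left |]].
Qed.

(** * Non-prime Gallai quotients are complete or linear *)

Definition two_valued C al be :=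
  forall x y, C x -> C y -> ~ equivA d C x y -> either_order al be (d x y, d y x).

Definition transitive_on C al :=
  forall x y z, C x -> C y -> C z -> ~ equivA d C x y -> ~ equivA d C y z ->
  ~ equivA d C x z -> d x y = al -> d y z = al -> d x z = al.

Lemma two_valued_al C al be x y :
  two_valued C al be -> al <> be -> C x -> C y -> ~ equivA d C x y ->
  d x y = al -> d y x = be.
Proof.
move=> tv ab Cx Cy nxy hxy.
by case: (tv x y Cx Cy nxy) => -[h1 h2] //; exfalso; apply: ab; rewrite -hxy h1.
Qed.

Lemma two_valued_not_al C al be x y :
  two_valued C al be -> C x -> C y -> ~ equivA d C x y ->
  d x y <> al -> d x y = be /\ d y x = al.
Proof. by move=> tv Cx Cy nxy hxy; case: (tv x y Cx Cy nxy) => -[]. Qed.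

Lemma module_hull_nontrivial C x y :
  is_strong d C -> C x -> C y -> ~ equivA d C x y -> ~ C `<=` module_hull x y ->
  nontrivial_submodule C (module_hull x y).
Proof.
move=> sC Cx Cy nxy /nonsubset[c [Cc nHc]].
split; first exact: module_hull_module.
split; first exact: module_hull_min sC.1 Cx Cy.
by split; [exists c | exists x, y; do 2 split=> //; move=> D].
Qed.

Lemma all_labelled_two_valued al be C X0 :
  is_strong d C -> nontrivial_submodule C X0 ->
  (forall N, nontrivial_submodule C N -> labelled al be N) -> two_valued C al be.
Proof.
move=> sC nX0 lab x y Cx Cy nxy.
have [Chull|NC] := pselect (C `<=` module_hull x y).
  have [H [K [nH [nK [oHK [Hx [nHy Ky]]]]]]] := separating_overlap sC nX0 Cx Cy Chull.
  exact/either_order_swap/(lab K nK H nH.1 (overlap_sym oHK)).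
have nN := module_hull_nontrivial sC Cx Cy nxy NC.
have [K [nK oNK]] := nontrivial_submodule_overlap sC nN.
have [[m [Nm Km]] [[a [Na nKa]] [b [Kb nNb]]]] := oNK.
have mN : is_module d (module_hull x y) by apply: module_hull_module.
have Nx : module_hull x y x by move=> D.
have Ny : module_hull x y y by move=> D.
have [Kx|nKx] := pselect (K x); have [Ky|nKy] := pselect (K y).
- by case: nKa; apply: (module_hull_min (moduleI mN nK.1) (conj Nx Kx) (conj Ny Ky) Na).2.
- exact/either_order_swap/(lab _ nN K nK.1 oNK y x Ny nKy Kx).
- exact: lab _ nN K nK.1 oNK x y Nx nKx Ky.
- by case: (module_hull_min (moduleD mN nK.1 Kb nNb) (conj Nx nKx) (conj Ny nKy) Nm).
Qed.

Definition inseparable x y z :=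
  module_hull x y z /\ module_hull y z x /\ module_hull x z y.

Lemma inseparable_split x y z D1 D2 :
  inseparable x y z -> is_module d D1 -> is_module d D2 ->
  D1 x \/ D2 x -> D1 y \/ D2 y -> D1 z \/ D2 z ->
  module_hull x y `<=` D1 \/ module_hull x y `<=` D2.
Proof.
move=> [zxy [xyz yxz]] mD1 mD2 hx hy hz.
have sub D : is_module d D -> (D x /\ D y) \/ (D y /\ D z) \/ (D x /\ D z) ->
    module_hull x y `<=` D.
  move=> mD Dxyz; apply: module_hull_min => //.
    by case: Dxyz => [[]|[[Dy Dz]|[]]] //; apply: xyz.
  by case: Dxyz => [[]|[[]|[Dx Dz]]] //; apply: yxz.
case: hx hy hz => ? [] ? [] ?;
  by first [left; apply: sub => //; tauto | right; apply: sub => //; tauto].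
Qed.

Lemma no_inseparable_triple C X0 x y z :
  is_strong d C -> nontrivial_submodule C X0 -> C x -> C y -> ~ equivA d C x y ->
  ~ inseparable x y z.
Proof.
move=> sC nX0 Cx Cy nxy ins; have [zxy [xyz yxz]] := ins.
have [Chull|NC] := pselect (C `<=` module_hull x y).
  have [H [K [nH [nK [oHK [Hx [nHy Ky]]]]]]] := separating_overlap sC nX0 Cx Cy Chull.
  have nHz : ~ H z by move=> Hz; apply: nHy; apply: yxz nH.1 Hx Hz.
  have [[m [Hm Km]] [[a [Ha nKa]] _]] := oHK.
  have Kz : K z.
    by case: (zxy _ (moduleU nH.1 nK.1 Hm Km) (or_introl Hx) (or_intror Ky)).
  have Kx : K x by apply: xyz nK.1 Ky Kz.
  by apply: nKa; apply: module_hull_min nK.1 Kx Ky a (Chull a (nH.2.1 a Ha)).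
have nN := module_hull_nontrivial sC Cx Cy nxy NC.
have [K [nK oNK]] := nontrivial_submodule_overlap sC nN.
have [[m [Nm Km]] [[a [Na nKa]] [b [Kb nNb]]]] := oNK.
have mN : is_module d (module_hull x y) by apply: module_hull_module.
have in_split p :
    module_hull x y p -> (module_hull x y `&` K) p \/ (module_hull x y `\` K) p.
  by move=> Np; have [Kp|nKp] := pselect (K p); [left | right].
have Nx : module_hull x y x by move=> D.
have Ny : module_hull x y y by move=> D.
case: (inseparable_split ins (moduleI mN nK.1) (moduleD mN nK.1 Kb nNb)
  (in_split x Nx) (in_split y Ny) (in_split z zxy)) => sub.
  by apply: nKa; case: (sub a Na).
by case: (sub m Nm).
Qed.

Lemma two_valued_transitive al be C X0 :
  is_strong d C -> nontrivial_submodule C X0 -> al <> be -> two_valued C al be ->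
  transitive_on C al.
Proof.
move=> sC nX0 ab tv x y z Cx Cy Cz nxy nyz nxz hxy hyz; apply: contrapT => nhxz.
have [hxz hzx] := two_valued_not_al tv Cx Cz nxz nhxz.
have hyx := two_valued_al tv ab Cx Cy nxy hxy.
have hzy := two_valued_al tv ab Cy Cz nyz hyz.
(* A module containing two of x, y, z but not the third sees both with the same
   arcs, whereas these arcs differ. *)
apply: (no_inseparable_triple (z := z) sC nX0 Cx Cy nxy); split; [|split].
- move=> D mD Dx Dy; apply: contrapT => nDz; apply: ab.
  by have [h _] := mD z x y nDz Dx Dy; rewrite -hzx h hzy.
- move=> D mD Dy Dz; apply: contrapT => nDx; apply: ab.
  by have [h _] := mD x y z nDx Dy Dz; rewrite -hxy h hxz.
- move=> D mD Dx Dz; apply: contrapT => nDy; apply: ab.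
  by have [h _] := mD y x z nDy Dx Dz; rewrite -hyz -h hyx.
Qed.

Lemma nontrivial_submodule_complete_or_linear C X0 :
  is_strong d C -> nontrivial_submodule C X0 ->
  exists al be, two_valued C al be /\ (al <> be -> transitive_on C al).
Proof.
move=> sC nX0; have [Y [nY oXY]] := nontrivial_submodule_overlap sC nX0.
have [[m [Xm Ym]] [[a [Xa nYa]] _]] := oXY.
exists (d a m), (d m a).
have lX0 : labelled (d a m) (d m a) X0.
  by apply: labelledP nX0.1 nY.1 oXY Xa nYa Ym _; left.
have tv := all_labelled_two_valued sC nX0 (fun N nN => all_labelled sC nX0 lX0 nN).
by split=> // ab; apply: two_valued_transitive sC nX0 ab tv.
Qed.

Definition three_components C :=
  exists I J K, components d C I /\ components d C J /\ components d C K /\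
    I <> J /\ J <> K /\ I <> K.

Lemma three_componentsP C x y z :
  C x -> C y -> C z -> ~ equivA d C x y -> ~ equivA d C y z -> ~ equivA d C x z ->
  three_components C.
Proof.
move=> Cx Cy Cz nxy nyz nxz; exists (comp C x), (comp C y), (comp C z).
do 3 (split; first by [exists x | exists y | exists z]).
by split; [exact: comp_neq | split; exact: comp_neq].
Qed.

Lemma quotient_module_union C (Q : set (set V)) :
  is_module d C -> quotient_module d C Q -> is_module d [set z | exists I, Q I /\ I z].
Proof.
move=> mC [QC qQ].
have NC : [set z | exists I, Q I /\ I z] `<=` C by move=> z [I [/QC[i [_ ->]] []]].
apply: (module_within mC NC) => z y y' Cz nz [J [QJ Jy]] [J' [QJ' Jy']].
have zz : comp C z z by split=> //; apply: equivA_refl.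
have nQz : ~ Q (comp C z) by move=> Qz; apply: nz; exists (comp C z).
by apply: (qQ (comp C z) J J') => //; exists z.
Qed.

Lemma nonprime_nontrivial_submodule C :
  is_strong d C -> three_components C -> ~ gallai_prime d C ->
  exists N, nontrivial_submodule C N.
Proof.
move=> sC three ngp.
have [X /not_implyP[qX /not_orP[nX0 /not_orP[nX1 nXC]]]] : exists X : set (set V),
    ~ (quotient_module d C X ->
       X = set0 \/ (exists I, X = [set I]) \/ X = components d C).
  by apply/existsNP => triv; apply: ngp.
have [XC _] := qX.
exists [set z | exists I, X I /\ I z].
split; first exact: quotient_module_union sC.1 qX.
split; first by move=> z [I [/XC[i [_ ->]] []]].
have [I1 XI1] : exists I, X I by apply: contrapT => nI; apply: nX0; apply/nonemptyPn.
have [I2 [XI2 nI21]] : exists J, X J /\ J <> I1.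
  apply: contrapT => nJ; apply: nX1; exists I1; rewrite eqEsubset; split=> [J XJ|J ->] //.
  by apply: contrapT => JI1; apply: nJ; exists J.
have [i1 [Ci1 E1]] := XC I1 XI1; have [i2 [Ci2 E2]] := XC I2 XI2.
split.
  apply: contrapT => allN; apply: nXC; rewrite eqEsubset; split=> // K [k [Ck ->]].
  have [J [XJ Jk]] : exists J, X J /\ J k by apply: contrapT => nk; apply: allN; exists k.
  have [j [Cj EJ]] := XC J XJ; move: Jk; rewrite EJ => -[_ jk].
  by change (X (comp C k)); rewrite -(comp_eq jk); move: XJ; rewrite EJ.
exists i1, i2.
split; first by exists I1; split=> //; rewrite E1; split=> //; apply: equivA_refl.
split; first by exists I2; split=> //; rewrite E2; split=> //; apply: equivA_refl.
by move=> e12; apply: nI21; rewrite E1 E2; apply: comp_eq; apply: equivA_sym.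
Qed.

Lemma two_components_two_valued C u v :
  C u -> C v -> ~ equivA d C u v -> ~ three_components C ->
  two_valued C (d u v) (d v u).
Proof.
move=> Cu Cv nuv three.
have two z : C z -> equivA d C u z \/ equivA d C v z.
  move=> Cz; apply: contrapT => /not_orP[nuz nvz]; apply: three.
  exact: three_componentsP Cu Cv Cz nuv nvz nuz.
have duv p q : equivA d C u p -> equivA d C v q -> (d p q, d q p) = (d u v, d v u).
  move=> up vq.
  have nqu : ~ equivA d C q u.
    by move=> qu; apply: nuv; apply: equivA_trans (equivA_sym qu) (equivA_sym vq).
  have [<- <-] := equivA_dE up nqu.
  by have [<- <-] := equivA_dE vq nuv.
move=> x y Cx Cy nxy.
case: (two x Cx) => ex; case: (two y Cy) => ey.
- by exfalso; apply: nxy; apply: equivA_trans (equivA_sym ex) ey.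
- by left; apply: duv.
- by right; case: (duv y x ey ex) => -> ->.
- by exfalso; apply: nxy; apply: equivA_trans (equivA_sym ex) ey.
Qed.

Lemma nonprime_complete_or_linear C u v :
  is_strong d C -> C u -> C v -> ~ equivA d C u v -> ~ gallai_prime d C ->
  exists al be, two_valued C al be /\ (al <> be -> transitive_on C al).
Proof.
move=> sC Cu Cv nuv ngp.
have [three|two] := pselect (three_components C).
  have [N nN] := nonprime_nontrivial_submodule sC three ngp.
  exact: nontrivial_submodule_complete_or_linear sC nN.
exists (d u v), (d v u); split; first exact: two_components_two_valued.
move=> _ x y z Cx Cy Cz nxy nyz nxz; exfalso; apply: two.
exact: three_componentsP Cx Cy Cz nxy nyz nxz.
Qed.

Lemma two_valued_type_set C al be u v :
  two_valued C al be -> C u -> C v -> ~ equivA d C u v ->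
  type_set d C al /\ type_set d C be.
Proof.
move=> tv Cu Cv nuv.
have nvu : ~ equivA d C v u by move/equivA_sym.
have Tuv : type_set d C (d u v) by apply/type_setE; exists u, v.
have Tvu : type_set d C (d v u) by apply/type_setE; exists v, u.
by case: (tv u v Cu Cv nuv) => -[<- <-].
Qed.

Lemma type_set_two_valued C al be w :
  two_valued C al be -> type_set d C w -> w = al \/ w = be.
Proof.
move=> tv /type_setE[x [y [Cx [Cy [nxy ->]]]]].
by case: (tv x y Cx Cy nxy) => -[->]; [left | right].
Qed.

Lemma two_valued_comm C al be : two_valued C al be -> two_valued C be al.
Proof. by move=> tv x y Cx Cy nxy; apply/either_order_comm/tv. Qed.

Definition lt_in C al x y := C x /\ C y /\ ~ equivA d C x y /\ d x y = al.
Definition le_in C al x y := C x /\ C y /\ (equivA d C x y \/ d x y = al).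

Section LinearQuotient.
Variables (C : set V) (al be : W).
Hypotheses (ab : al <> be) (tv : two_valued C al be) (tr : transitive_on C al).

Lemma lt_in_flip x y : lt_in C al x y -> d y x = be.
Proof. by move=> [Cx [Cy [nxy hxy]]]; apply: two_valued_al tv ab Cx Cy nxy hxy. Qed.

Lemma lt_in_total x y : C x -> C y -> ~ equivA d C x y -> lt_in C al x y \/ lt_in C al y x.
Proof.
move=> Cx Cy nxy; case: (tv Cx Cy nxy) => -[hxy hyx]; first by left.
by right; do 2 split=> //; split=> // /equivA_sym.
Qed.

Lemma lt_in_trans x y z : lt_in C al x y -> lt_in C al y z -> lt_in C al x z.
Proof.
move=> lxy lyz; have [Cx [Cy [nxy hxy]]] := lxy; have [_ [Cz [nyz hyz]]] := lyz.
have nxz : ~ equivA d C x z.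
  move=> xz; apply: ab; rewrite -hxy -(lt_in_flip lyz).
  by have [] := equivA_dE xz (fun yx => nxy (equivA_sym yx)).
by do 3 split=> //; apply: tr hxy hyz.
Qed.

Lemma le_lt_in_trans x y z : le_in C al x y -> lt_in C al y z -> lt_in C al x z.
Proof.
move=> [Cx [Cy xy]] lyz; have [_ [Cz [nyz hyz]]] := lyz.
have [exy|nxy] := pselect (equivA d C x y); last first.
  by case: xy => // hxy; apply: lt_in_trans lyz.
rewrite /lt_in; have [_ <-] := equivA_dE (equivA_sym exy) (fun zy => nyz (equivA_sym zy)).
split=> //; split=> //; split=> // xz.
by apply: nyz; apply: equivA_trans (equivA_sym exy) xz.
Qed.

Lemma lt_le_in_trans x y z : lt_in C al x y -> le_in C al y z -> lt_in C al x z.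
Proof.
move=> lxy [_ [Cz yz]]; have [Cx [Cy [nxy hxy]]] := lxy.
have [eyz|nyz] := pselect (equivA d C y z); last first.
  by case: yz => // hyz; apply: lt_in_trans lxy _; split.
rewrite /lt_in; have [<- _] := equivA_dE eyz nxy.
split=> //; split=> //; split=> // xz.
by apply: nxy; apply: equivA_trans xz (equivA_sym eyz).
Qed.

Lemma transitive_on_swap : transitive_on C be.
Proof.
have tv' := two_valued_comm tv; have ba : be <> al by move/esym.
move=> x y z Cx Cy Cz nxy nyz nxz hxy hyz.
have lzy : lt_in C al z y.
  split=> //; split=> //.
  by split; [move/equivA_sym | apply: two_valued_al tv' ba Cy Cz nyz hyz].
have lyx : lt_in C al y x.
  split=> //; split=> //.
  by split; [move/equivA_sym | apply: two_valued_al tv' ba Cx Cy nxy hxy].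
exact: lt_in_flip (lt_in_trans lzy lyx).
Qed.

End LinearQuotient.

Lemma two_valued_relabel C alt bet al be :
  two_valued C alt bet -> (alt <> bet -> transitive_on C alt) -> al <> be ->
  type_set d C al -> type_set d C be -> two_valued C al be /\ transitive_on C al.
Proof.
move=> tv tr + Tal Tbe.
case: (type_set_two_valued tv Tal) => ->; case: (type_set_two_valued tv Tbe) => -> ab //.
- by split; last exact: tr.
- split; first exact: two_valued_comm.
  exact: transitive_on_swap (nesym ab) tv (tr (nesym ab)).
Qed.

(** * Modules between a strong module and an enclosing module *)

Lemma S_M_pair_mem_nequiv u t :
  u <> t -> S_M d [set u; t] u /\ S_M d [set u; t] t /\ ~ equivA d (S_M d [set u; t]) u t.
Proof.
move=> ut; split; first by apply: sub_S_M; left.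
by split; [apply: sub_S_M; right | apply: S_M_pair_nequiv].
Qed.

Section LinearExtension.
Variables (A B : set V) (x0 : V) (al be : W).
Hypotheses (mA : is_module d A) (sB : is_strong d B) (BA : B `<=` A) (Bx0 : B x0).
Hypotheses (ab : al <> be) (tvB : two_valued B al be) (trB : transitive_on B al).
Hypothesis linR : forall t, A t -> ~ B t ->
  two_valued (S_M d [set x0; t]) al be /\ transitive_on (S_M d [set x0; t]) al.

Local Notation R t := (S_M d [set x0; t]).

Lemma outside_pair t : ~ B t -> R t x0 /\ R t t /\ ~ equivA d (R t) x0 t.
Proof. by move=> nBt; apply: S_M_pair_mem_nequiv => e; apply: nBt; rewrite -e. Qed.

Lemma outside_below t : A t -> ~ B t -> d t x0 = al -> d x0 t = be.
Proof.
move=> At nBt; have [Rx0 [Rt nx0t]] := outside_pair nBt.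
by apply: two_valued_al (linR At nBt).1 ab Rt Rx0 (fun e => nx0t (equivA_sym e)).
Qed.

Lemma outside_above t : A t -> ~ B t -> d t x0 <> al -> d t x0 = be /\ d x0 t = al.
Proof.
move=> At nBt; have [Rx0 [Rt nx0t]] := outside_pair nBt.
by apply: two_valued_not_al (linR At nBt).1 Rt Rx0 (fun e => nx0t (equivA_sym e)).
Qed.

Lemma outside_lt s t :
  A s -> ~ B s -> A t -> ~ B t -> d s x0 = al -> d t x0 = be -> d s t = al /\ d t s = be.
Proof.
move=> As nBs At nBt hs ht.
have [Rsx0 [Rss nx0s]] := outside_pair nBs; have [Rtx0 [Rtt nx0t]] := outside_pair nBt.
have [tvs trs] := linR As nBs; have [tvt trt] := linR At nBt.
have [_ hx0t] : d t x0 = be /\ d x0 t = al.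
  by apply: outside_above; rewrite // ht; apply: nesym.
(* R s and R t are nested strong modules; s < x0 < t in the larger one. *)
suff [C' [tv' lst]] : exists C', two_valued C' al be /\ lt_in C' al s t.
  by split; [exact: lst.2.2.2 | apply: (lt_in_flip ab tv' lst)].
have sRs : is_strong d (R s) by apply: S_M_strong.
have mRt : is_module d (R t) by apply: S_M_module.
case: (strong_nested sRs mRt Rsx0 Rtx0) => sub.
- exists (R t); split=> //; apply: (le_lt_in_trans ab tvt trt (y := x0)).
    by split; [apply: sub | split=> //; right].
  by do 3 split=> //.
- exists (R s); split=> //; apply: (lt_le_in_trans ab tvs trs (y := x0)).
    by split=> //; split=> //; split=> // /equivA_sym.
  by split=> //; split; [apply: sub | right].
Qed.

Lemma below_cut_module low :
  B low -> is_module d [set y | (A y /\ ~ B y /\ d y x0 = al) \/ le_in B al y low].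
Proof.
move=> Blow; set M := [set y | _ \/ _].
have MA : M `<=` A by move=> y [[Ay _]|[By _]]; last exact: BA.
suff key z m : A z -> ~ M z -> M m -> d z m = be /\ d m z = al.
  apply: (module_within mA MA) => z m m' Az nMz Mm Mm'.
  by have [-> ->] := key z m Az nMz Mm; have [-> ->] := key z m' Az nMz Mm'.
move=> Az nMz Mm; have [Bz|nBz] := pselect (B z).
  have [nzl hzl] : ~ equivA d B z low /\ d z low <> al.
    by split=> h; apply: nMz; right; do 2 split=> //; [left | right].
  have [_ hlz] := two_valued_not_al tvB Bz Blow nzl hzl.
  have lowz : lt_in B al low z by do 2 split=> //; split=> // /equivA_sym.
  case: Mm => [[Am [nBm hm]]|lem].
    have [-> ->] := sB.1 m z x0 nBm Bz Bx0.
    by split=> //; apply: outside_below.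
  have lmz := le_lt_in_trans ab tvB trB lem lowz.
  by split; [apply: (lt_in_flip ab tvB lmz) | exact: lmz.2.2.2].
have [hz hx0z] := outside_above Az nBz (fun e => nMz (or_introl (conj Az (conj nBz e)))).
case: Mm => [[Am [nBm hm]]|[Bm _]].
  by have [-> ->] := outside_lt Am nBm Az nBz hm hz.
by have [-> ->] := sB.1 z m x0 nBz Bm Bx0.
Qed.

Lemma outside_above_all u v :
  B u -> B v -> ~ equivA d B u v -> forall s, A s -> ~ B s -> d s x0 = be.
Proof.
move=> Bu Bv nuv s As nBs; apply: contrapT => nhs.
have hs : d s x0 = al.
  by apply: contrapT => nhs'; apply: nhs; apply: (outside_above As nBs nhs').1.
have [low [high lh]] : exists low high, lt_in B al low high.
  by case: (lt_in_total tvB Bu Bv nuv) => ?; [exists u, v | exists v, u].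
have [Blow [Bhigh [nlh _]]] := lh.
apply: (strong_not_overlap sB (below_cut_module Blow)).
split; first by exists low; split=> //; right; do 2 split=> //; left; apply: equivA_refl.
split; last by exists s; split=> //; left.
exists high; split=> //; case=> [[_ [nBhigh _]]|[_ [_ [hl|hhl]]]].
- exact: nBhigh Bhigh.
- exact: nlh (equivA_sym hl).
- by apply: ab; rewrite -hhl (lt_in_flip ab tvB lh).
Qed.

End LinearExtension.

Lemma linear_extension_contra A B u v t0 al be :
  is_module d A -> is_strong d B -> B `<=` A -> B u -> B v -> ~ equivA d B u v ->
  A t0 -> ~ B t0 -> al <> be -> two_valued B al be -> transitive_on B al ->
  (forall t, A t -> ~ B t ->
     two_valued (S_M d [set u; t]) al be /\ transitive_on (S_M d [set u; t]) al) ->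
  False.
Proof.
move=> mA sB BA Bu Bv nuv At0 nBt0 ab tvB trB linR.
have linR' t : A t -> ~ B t ->
    two_valued (S_M d [set u; t]) be al /\ transitive_on (S_M d [set u; t]) be.
  move=> At nBt; have [tv tr] := linR t At nBt.
  by split; [apply: two_valued_comm | apply: transitive_on_swap ab tv tr].
have above := outside_above_all mA sB BA Bu ab tvB trB linR Bu Bv nuv At0 nBt0.
have below := outside_above_all mA sB BA Bu (nesym ab) (two_valued_comm tvB)
  (transitive_on_swap ab tvB trB) linR' Bu Bv nuv At0 nBt0.
by apply: ab; rewrite -below above.
Qed.

Lemma constant_extension_contra A B u v t0 w :
  is_module d A -> is_strong d B -> B `<=` A -> B u -> B v -> ~ equivA d B u v ->
  A t0 -> ~ B t0 ->
  (forall x y, B x -> B y -> ~ equivA d B x y -> d x y = w) ->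
  (forall t, A t -> ~ B t -> d u t = w /\ d t u = w) ->
  False.
Proof.
move=> mA sB BA Bu Bv nuv At0 nBt0 constB constR.
pose M := [set y | comp B u y \/ (A y /\ ~ B y)].
have MA : M `<=` A by move=> y [[/BA]|[]].
have mM : is_module d M.
  apply: (module_within mA MA) => z m m' Az nMz.
  have Bz : B z by apply: contrapT => nBz; apply: nMz; right.
  have nuz : ~ equivA d B u z by move=> uz; apply: nMz; left.
  have nzu : ~ equivA d B z u by move/equivA_sym.
  suff const y : M y -> d z y = w /\ d y z = w.
    by move=> /const[-> ->] /const[-> ->].
  case=> [[By uy]|[Ay nBy]].
    by have [<- <-] := equivA_dE uy nzu; split; apply: constB.
  by have [-> ->] := sB.1 y z u nBy Bz Bu; apply: constR.
apply: (strong_not_overlap sB mM).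
split; first by exists u; split=> //; left; split=> //; apply: equivA_refl.
split; last by exists t0; split=> //; right.
by exists v; split=> // -[[_ uv]|[_ nBv]]; [apply: nuv | apply: nBv].
Qed.

Lemma no_uniform_extension A B u v t0 :
  is_module d A -> is_strong d B -> B `<=` A -> B u -> B v -> ~ equivA d B u v ->
  A t0 -> ~ B t0 -> ~ gallai_prime d B ->
  (forall t, A t -> ~ B t -> ~ gallai_prime d (S_M d [set u; t]) /\
     type_set d (S_M d [set u; t]) = type_set d B) ->
  False.
Proof.
move=> mA sB BA Bu Bv nuv At0 nBt0 ngB HR.
have Tuv : type_set d B (d u v) by apply/type_setE; exists u, v.
have [[a [b [Ta [Tb nab]]]]|single] :=
  pselect (exists a b, type_set d B a /\ type_set d B b /\ a <> b); last first.
  have constT w : type_set d B w -> w = d u v.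
    by move=> Tw; apply: contrapT => ne; apply: single; exists w, (d u v).
  apply: (constant_extension_contra (w := d u v) mA sB BA Bu Bv nuv At0 nBt0).
    by move=> x y Bx By nxy; apply: constT; apply/type_setE; exists x, y.
  move=> t At nBt; have ut : u <> t by move=> e; apply: nBt; rewrite -e.
  have [Ru [Rt nut]] := S_M_pair_mem_nequiv ut; have [_ TR] := HR t At nBt.
  have ntu : ~ equivA d (S_M d [set u; t]) t u by move/equivA_sym.
  by split; apply: constT; rewrite -TR; apply/type_setE; [exists u, t | exists t, u].
have [al [be [tvB trB]]] := nonprime_complete_or_linear sB Bu Bv nuv ngB.
have ab : al <> be.
  move=> e; apply: nab; rewrite -e in tvB.
  by case: (type_set_two_valued tvB Ta) => ->; case: (type_set_two_valued tvB Tb) => ->.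
have [Tal Tbe] := two_valued_type_set tvB Bu Bv nuv.
apply: (linear_extension_contra mA sB BA Bu Bv nuv At0 nBt0 ab tvB (trB ab)) => t At nBt.
have ut : u <> t by move=> e; apply: nBt; rewrite -e.
have [Ru [Rt nut]] := S_M_pair_mem_nequiv ut; have [ngR TR] := HR t At nBt.
have sR : is_strong d (S_M d [set u; t]) by apply: S_M_strong.
have [alt [bet [tvR trR]]] := nonprime_complete_or_linear sR Ru Rt nut ngR.
by apply: two_valued_relabel tvR trR ab _ _; rewrite TR.
Qed.

Lemma S_M_pair_robust u t : u <> t -> is_robust d (S_M d [set u; t]).
Proof. by move=> ut; split; [apply: S_M_module | right; exists u, t]. Qed.

Lemma strong_proper_S_M_pair B u t :
  is_strong d B -> B u -> ~ B t -> B `<` S_M d [set u; t].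
Proof.
move=> sB Bu nBt; have ut : u <> t by move=> e; apply: nBt; rewrite -e.
have [Ru [Rt _]] := S_M_pair_mem_nequiv ut.
split; last by move=> RB; apply: nBt; apply: RB.
have mR : is_module d (S_M d [set u; t]) by apply: S_M_module.
case: (strong_nested sB mR Bu Ru) => // RB.
by exfalso; apply: nBt; apply: RB.
Qed.

Lemma type_of_nonprime C : ~ gallai_prime d C -> type_of d C = Some (type_set d C).
Proof. by rewrite /type_of; case: pselect. Qed.

Lemma type_of_eq_nonprime C D :
  ~ gallai_prime d D -> type_of d C = type_of d D ->
  ~ gallai_prime d C /\ type_set d C = type_set d D.
Proof.
by move=> ngD; rewrite (type_of_nonprime ngD) /type_of; case: pselect => // ngC [->].
Qed.

End BinaryStructure.

Theorem proposition6p10 (V W : Type) (d : V -> V -> W) (A B : set V) :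
  is_robust d A -> is_robust d B -> atleast2 A -> atleast2 B ->
  B `<` A ->
  ~ gallai_prime d A -> ~ gallai_prime d B ->
  type_set d A = type_set d B ->
  exists C : set V, is_robust d C /\ B `<` C /\ C `<` A /\
    type_of d C <> type_of d A.
Proof.
move=> rA rB a2A a2B [BA nAB] ngA ngB hT.
have [a [a' [_ EA]]] := robust_pairE rA a2A.
have [u [v [uv EB]]] := robust_pairE rB a2B.
have sA : is_strong d A by rewrite EA; apply: S_M_strong.
have sB : is_strong d B by rewrite EB; apply: S_M_strong.
have [Bu [Bv nuv]] : B u /\ B v /\ ~ equivA d B u v.
  by rewrite EB; apply: S_M_pair_mem_nequiv.
have [t0 [At0 nBt0]] := nonsubset nAB.
apply: contrapT => noC.
apply: (no_uniform_extension sA.1 sB BA Bu Bv nuv At0 nBt0 ngB) => t At nBt.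
have RA : S_M d [set u; t] `<=` A by apply: S_M_min => // z [->|->]; [apply: BA |].
rewrite -hT; have [AR|nAR] := pselect (A `<=` S_M d [set u; t]).
  by have -> : S_M d [set u; t] = A by rewrite eqEsubset.
apply: type_of_eq_nonprime => //; apply: contrapT => neq; apply: noC.
have ut : u <> t by move=> e; apply: nBt; rewrite -e.
exists (S_M d [set u; t]); split; first exact: S_M_pair_robust.
by split; [apply: strong_proper_S_M_pair | split].
Qed.
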